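(* Let $n\geq 2$ and let $A$ be an $L_n$-good $n\times n$ matrix with $A_{i,j}=1$. If $A_{i',k}=1$ where $i'\equiv i-1$ or $i'\equiv i+1 \pmod n$, then $k\equiv j-1$ or $k\equiv j+1\pmod n$. (Here row and column indices are taken modulo $n$ in $\{1,\ldots,n\}$, so that index $0$ means $n$ and index $n+1$ means $1$.)
   Context: For $n\geq 2$, $L_n$ is the set of vectors $\vec{x}=(x_1,\ldots,x_n)\in\mathbb{Z}_2^n$ with no $i\in\{1,\ldots,n-1\}$ such that $x_i=x_{i+1}=1$, and with not both $x_1=1$ and $x_n=1$. An $n\times n$ matrix $A$ over $\mathbb{Z}_2$ is $L_n$-good if it is invertible and $A\vec{x}\in L_n$ for all $\vec{x}\in L_n$. $A_{i,j}$ denotes the $(i,j)$ entry of $A$. *)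

From mathcomp Require Import all_boot all_order all_algebra.
Set Implicit Arguments. Unset Strict Implicit. Unset Printing Implicit Defensive.
Import GRing.Theory.
Local Open Scope ring_scope.

(* Indices 1..n of the paper are represented 0-based by 'I_n (index k+1 <-> k).
   Vectors in Z_2^n are column vectors 'cV['F_2]_n. *)

Definition in_L (n : nat) (x : 'cV['F_2]_n) : bool :=
  [forall i : 'I_n, forall j : 'I_n,
     ((j : nat) == i.+1) ==> ~~ ((x i 0 == 1) && (x j 0 == 1))]
  && [forall i : 'I_n, forall j : 'I_n,
     (((i : nat) == 0%N) && ((j : nat) == n.-1)) ==> ~~ ((x i 0 == 1) && (x j 0 == 1))].

Definition L_good (n : nat) (A : 'M['F_2]_n) : Prop :=
  A \in unitmx /\ forall x : 'cV['F_2]_n, in_L x -> in_L (A *m x).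

Definition cyc_adj (n : nat) (a b : 'I_n) : bool :=
  (b == ordS a) || (b == ord_pred a).

From mathcomp Require Import all_boot all_order all_algebra.
From mathcomp Require Import zify.
Local Open Scope ring_scope.
Set Implicit Arguments. Unset Strict Implicit.
Import GRing.Theory.

(* An L_n-good matrix maps e_j, and e_j + e_k for non-adjacent j, k, into L_n.
   So no column of A has 1's in two cyclically adjacent rows; if
   A_{i,j} = A_{i',k} = 1 with i, i' adjacent and j, k not adjacent, then
   A_{i',j} = A_{i,k} = 0 and the column A(e_j + e_k) has 1's at i and i'. *)

Lemma eq_ordS (n : nat) (a b : 'I_n) :
  (b == ordS a) = ((b : nat) == a.+1) || (((a : nat) == n.-1) && ((b : nat) == 0%N)).
Proof.
rewrite -val_eqE /=; have a_lt := ltn_ord a; have b_lt := ltn_ord b.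
have [lt|ge] := ltnP a.+1 n; first by rewrite modn_small //; lia.
have -> : a.+1 = n by lia.
by rewrite modnn; lia.
Qed.

Lemma cyc_adjC (n : nat) (a b : 'I_n) : cyc_adj a b = cyc_adj b a.
Proof.
rewrite /cyc_adj orbC eq_sym (can2_eq (@ord_predK n) (@ordSK n)).
by rewrite [b == _]eq_sym (can2_eq (@ordSK n) (@ord_predK n)).
Qed.

Lemma cyc_adj_irr (n : nat) (a : 'I_n) : (1 < n)%N -> ~~ cyc_adj a a.
Proof.
move=> n_gt1; rewrite /cyc_adj [a == ord_pred a]eq_sym.
rewrite (can2_eq (@ord_predK n) (@ordSK n)) orbb eq_ordS.
by have := ltn_ord a; lia.
Qed.

Lemma in_LP (n : nat) (x : 'cV['F_2]_n) :
  reflect (forall a b : 'I_n, cyc_adj a b -> x a 0 = 1 -> x b 0 = 1 -> False)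
          (in_L x).
Proof.
apply: (iffP andP) => [[/forallP step /forallP wrap] | noadj].
  suff succ a b : b = ordS a -> x a 0 = 1 -> x b 0 = 1 -> False.
    move=> a b /orP[/eqP -> | /eqP ->]; first exact: succ.
    by move=> xa xb; apply: (succ _ a) xb xa; rewrite ord_predK.
  move=> /eqP; rewrite eq_ordS => /orP[ab | /andP[an b0]] /eqP xa /eqP xb.
    by have /forallP/(_ b)/implyP/(_ ab) := step a; rewrite xa xb.
  by have /forallP/(_ a)/implyP := wrap b; rewrite b0 an xa xb => /(_ isT).
split; apply/forallP => a; apply/forallP => b; apply/implyP => ab;
  apply/negP => /andP[/eqP xa /eqP xb].
  by apply: (noadj a b) xa xb; rewrite /cyc_adj eq_ordS ab.
by apply: (noadj b a) xb xa; rewrite /cyc_adj eq_ordS andbC ab orbT.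
Qed.

Lemma in_L_of_support (n : nat) (x : 'cV['F_2]_n) (j k : 'I_n) :
  (1 < n)%N -> ~~ cyc_adj j k -> (forall r, x r 0 = 1 -> (r == j) || (r == k)) ->
  in_L x.
Proof.
move=> n_gt1 jk supp; apply/in_LP => a b ab /supp ja /supp jb.
move: ab; case/orP: ja => /eqP->; case/orP: jb => /eqP->;
  by apply/negP; rewrite ?(cyc_adj_irr _ n_gt1) // cyc_adjC.
Qed.

Lemma F2_neq1 (x : 'F_2) : x != 1 -> x = 0.
Proof. by case: x => [[|[|m]] lt_m] // _; apply: val_inj. Qed.

Lemma support_delta_mx2 (n : nat) (j k r : 'I_n) :
  (delta_mx j 0 + delta_mx k 0 : 'cV['F_2]_n) r 0 = 1 -> (r == j) || (r == k).
Proof. by rewrite !mxE; case: (r == j); case: (r == k). Qed.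

Lemma support_delta_mx (n : nat) (j r : 'I_n) :
  (delta_mx j 0 : 'cV['F_2]_n) r 0 = 1 -> r == j.
Proof. by rewrite mxE; case: (r == j). Qed.

Theorem lemma4 (n : nat) (hn : (2 <= n)%N) (A : 'M['F_2]_n) (i j i' k : 'I_n) :
  L_good A -> A i j = 1 -> cyc_adj i i' -> A i' k = 1 -> cyc_adj j k.
Proof.
case=> _ goodA Aij ii' Ai'k; apply/negPn/negP => jk.
have col_in_L l : in_L (col l A).
  rewrite colE; apply: goodA; apply: (in_L_of_support hn (cyc_adj_irr l hn)).
  by move=> r /support_delta_mx ->.
have Ai'j : A i' j = 0.
  by apply/F2_neq1/eqP => Ai'j; apply: (in_LP _ (col_in_L j) i i' ii'); rewrite !mxE.
have Aik : A i k = 0.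
  apply/F2_neq1/eqP => Aik; apply: (in_LP _ (col_in_L k) i' i); rewrite ?mxE //.
  by rewrite cyc_adjC.
have := goodA _ (in_L_of_support hn jk (@support_delta_mx2 _ j k)).
rewrite mulmxDr -!colE => /in_LP/(_ i i' ii'); apply; rewrite !mxE.
- by rewrite Aij Aik addr0.
- by rewrite Ai'j Ai'k add0r.
Qed.
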